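(* Let $\tau\ge1$ and $\mathcal C$ a finite set of candidates. Form the pairwise majority graph on $\mathcal C$ in which each pairwise winner is determined by Weighted Majority Rule 3. Then every candidate in the uncovered set of this graph has distortion at most $\max\{(\frac{\tau+2}{\tau})^2,\tau^2\}$.
   Context: Voters $N=\{1,\dots,n\}$ and candidates $\mathcal C$ are points of an arbitrary metric space $(X,d)$. $SC(Y)=\sum_{i\in N}d(i,Y)$; distortion of $P$ is $SC(P)/\min_{Z\in\mathcal C}SC(Z)$. For a pair $P,Q$, Weighted Majority Rule 3 counts $|A|$, the number of voters with $d(i,Q)/d(i,P)\ge\tau$, and $|B|$, the number with $d(j,P)/d(j,Q)\ge\tau$, and declares $P$ the winner if $|A|\ge|B|$, else $Q$ (other voters are ignored). A candidate $P$ is in the uncovered set if for every other candidate $Z$, either $P$ beats $Z$, or there is a candidate $Q$ such that $P$ beats $Q$ and $Q$ beats $Z$. *)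

From Stdlib Require Import Reals List.
Import ListNotations.
Open Scope R_scope.

Definition is_metric {X : Type} (d : X -> X -> R) : Prop :=
  (forall x y, 0 <= d x y) /\
  (forall x y, d x y = 0 <-> x = y) /\
  (forall x y, d x y = d y x) /\
  (forall x y z, d x z <= d x y + d y z).

Definition SC {X : Type} (d : X -> X -> R) (voters : list X) (Y : X) : R :=
  fold_right (fun i acc => d i Y + acc) 0 voters.

(* |A| : number of voters i with d(i,Q)/d(i,P) >= tau, i.e. d(i,Q) >= tau * d(i,P). *)
Definition countA {X : Type} (d : X -> X -> R) (tau : R) (voters : list X) (P Q : X) : nat :=
  length (filter (fun i => if Rle_dec (tau * d i P) (d i Q) then true else false) voters).

(* Weighted Majority Rule 3: P beats Q iff |A| >= |B|, where
   |B| = number of voters j with d(j,P)/d(j,Q) >= tau = countA with roles swapped. *)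
Definition wmr3_beats {X : Type} (d : X -> X -> R) (tau : R) (voters : list X) (P Q : X) : Prop :=
  (countA d tau voters Q P <= countA d tau voters P Q)%nat.

Definition uncovered {X : Type} (d : X -> X -> R) (tau : R) (voters : list X) (C : list X) (P : X) : Prop :=
  In P C /\
  forall Z, In Z C -> Z <> P ->
    wmr3_beats d tau voters P Z \/
    exists Q, In Q C /\ wmr3_beats d tau voters P Q /\ wmr3_beats d tau voters Q Z.

From Stdlib Require Import Reals List Lra Psatz Classical.
Open Scope R_scope.

(* Let c = max((tau+2)/tau, tau), so that c*tau >= tau+2 and
   c >= tau >= 1.  For a single voter i at distances x = d(i,P), z = d(i,Z)
   from two candidates at distance D = d(P,Z), a case analysis on the two
   tau-threshold tests of Weighted Majority Rule 3 gives
       x <= c*z + D * ([i counts for Z] - [i counts for P]).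
   Summing over voters, SC(P) <= c*SC(Z) + D*(|B| - |A|); hence whenever P
   beats Z (|A| >= |B|) we get SC(P) <= c*SC(Z).  An uncovered candidate
   reaches every candidate Z in at most two beating steps, so
   SC(P) <= c^2 * SC(Z), and c^2 = max(((tau+2)/tau)^2, tau^2). *)

Definition indicator {A B : Prop} (b : {A} + {B}) : R := if b then 1 else 0.

(* Per-voter inequality: the cost of P at voter i is bounded by c times the
   cost of Z, corrected by D times the voter's net vote for Z over P.
   Here x, z are the voter's distances to P, Z and D = d(P,Z); the two
   triangle inequalities are the only metric facts used. *)
Lemma voter_cost_bound (tau c x z D : R) :
  1 <= tau -> tau + 2 <= c * tau -> tau <= c ->
  0 <= x -> 0 <= z -> D <= x + z -> x <= z + D ->
  x <= c * z + D * (indicator (Rle_dec (tau * z) x) -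
                    indicator (Rle_dec (tau * x) z)).
Proof.
  intros Htau Hc_sum Hc_tau Hx Hz Htri1 Htri2; unfold indicator.
  destruct (Rle_dec (tau * z) x) as [Hfor_Z | Hnot_Z];
  destruct (Rle_dec (tau * x) z) as [Hfor_P | Hnot_P].
  - (* both tests hold: this forces x <= z *)
    nra.
  -
    nra.
  - (* the voter counts only for P: x <= z/tau, so 2x + z <= c z *)
    assert (tau * (2 * x + z) <= c * tau * z) by nra.
    assert (2 * x + z <= c * z) by nra.
    nra.
  - (* neither test holds: x < tau z <= c z *)
    nra.
Qed.

Lemma SC_nonneg {X : Type} (d : X -> X -> R) (vs : list X) (Y : X) :
  is_metric d -> 0 <= SC d vs Y.
Proof.
  intros [Hd_nonneg _]. induction vs as [|i vs IH]; simpl; [lra|].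
  specialize (Hd_nonneg i Y). lra.
Qed.

Lemma SC_vote_margin_bound {X : Type} (d : X -> X -> R) (tau c : R)
    (vs : list X) (P Z : X) :
  is_metric d -> 1 <= tau -> tau + 2 <= c * tau -> tau <= c ->
  SC d vs P <= c * SC d vs Z +
    d P Z * (INR (countA d tau vs Z P) - INR (countA d tau vs P Z)).
Proof.
  intros (Hd_nonneg & _ & Hsym & Htri) Htau Hc_sum Hc_tau.
  induction vs as [|i vs IH]; unfold SC, countA in *; simpl; [lra|].
  assert (Htri1 : d P Z <= d i P + d i Z) by (rewrite (Hsym i P); apply Htri).
  assert (Htri2 : d i P <= d i Z + d P Z) by (rewrite (Hsym P Z); apply Htri).
  pose proof (voter_cost_bound tau c (d i P) (d i Z) (d P Z) Htau Hc_sum Hc_tau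
                (Hd_nonneg _ _) (Hd_nonneg _ _) Htri1 Htri2) as Hvoter.
  unfold indicator in Hvoter.
  destruct (Rle_dec (tau * d i Z) (d i P)); destruct (Rle_dec (tau * d i P) (d i Z));
    simpl length; rewrite ?S_INR; lra.
Qed.

Lemma beats_cost_bound {X : Type} (d : X -> X -> R) (tau c : R)
    (vs : list X) (P Z : X) :
  is_metric d -> 1 <= tau -> tau + 2 <= c * tau -> tau <= c ->
  wmr3_beats d tau vs P Z -> SC d vs P <= c * SC d vs Z.
Proof.
  intros Hm Htau Hc_sum Hc_tau Hbeats.
  pose proof (SC_vote_margin_bound d tau c vs P Z Hm Htau Hc_sum Hc_tau).
  apply le_INR in Hbeats.
  assert (0 <= d P Z) by (destruct Hm as [Hd_nonneg _]; apply Hd_nonneg).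
  nra.
Qed.

Definition edge_factor (tau : R) : R := Rmax ((tau + 2) / tau) tau.

Lemma edge_factor_ge_tau (tau : R) : tau <= edge_factor tau.
Proof. apply Rmax_r. Qed.

Lemma edge_factor_sum (tau : R) : 1 <= tau -> tau + 2 <= edge_factor tau * tau.
Proof.
  intros Htau.
  assert ((tau + 2) / tau <= edge_factor tau) by apply Rmax_l.
  assert ((tau + 2) / tau * tau = tau + 2) by (field; lra).
  nra.
Qed.

Lemma edge_factor_sq (tau : R) :
  1 <= tau -> edge_factor tau ^ 2 = Rmax (((tau + 2) / tau) ^ 2) (tau ^ 2).
Proof.
  intros Htau.
  assert (0 <= (tau + 2) / tau) by (apply Rmult_le_pos; [lra | left; apply Rinv_0_lt_compat; lra]).
  unfold edge_factor, Rmax.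
  destruct (Rle_dec ((tau + 2) / tau) tau);
    destruct (Rle_dec (((tau + 2) / tau) ^ 2) (tau ^ 2)); nra.
Qed.

Lemma two_step_bound (c a b e : R) :
  1 <= c -> 0 <= e -> a <= c * b -> b <= c * e -> a <= c ^ 2 * e.
Proof. intros. nra. Qed.

Theorem mainTheorem8 (X : Type) (d : X -> X -> R) (voters : list X) (C : list X) (tau : R) :
  is_metric d -> 1 <= tau ->
  forall P, uncovered d tau voters C P ->
  forall Z, In Z C ->
    SC d voters P <= Rmax (((tau + 2) / tau) ^ 2) (tau ^ 2) * SC d voters Z.
Proof.
  intros Hm Htau P [_ Hunc] Z HZ.
  rewrite <- (edge_factor_sq tau Htau).
  set (c := edge_factor tau).
  assert (Hc_tau : tau <= c) by apply edge_factor_ge_tau.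
  assert (Hc_sum : tau + 2 <= c * tau) by (apply edge_factor_sum; exact Htau).
  assert (Hc1 : 1 <= c) by lra.
  pose proof (SC_nonneg d voters Z Hm) as HZ0.
  pose proof (fun A B => beats_cost_bound d tau c voters A B Hm Htau Hc_sum Hc_tau)
    as Hedge.
  destruct (classic (Z = P)) as [-> | Hne].
  - apply (two_step_bound c _ (SC d voters P)); nra.
  - destruct (Hunc Z HZ Hne) as [Hbeats | (Q & _ & HPQ & HQZ)].
    + apply (two_step_bound c _ (SC d voters Z)); [lra | lra | exact (Hedge P Z Hbeats) | nra].
    + exact (two_step_bound c _ _ _ Hc1 HZ0 (Hedge P Q HPQ) (Hedge Q Z HQZ)).
Qed.
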